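(* Let $G$ be a maximal $3$-$\gamma_{c}$-vertex critical graph of order $n$, with independence number $\alpha$ and clique number $\omega$. Then $\alpha+\omega\leq n-1$, and equality holds if and only if $G\in\mathcal{G}_{1}(l)$ for some $l\geq 2$.
   Context: All graphs are finite, simple and connected. A set $D\subseteq V(G)$ is a connected dominating set of $G$ if every vertex of $G$ is in $D$ or adjacent to a vertex of $D$, and $G[D]$ is connected; $\gamma_{c}(G)$ is the minimum cardinality of such a set. $G$ is $k$-$\gamma_{c}$-edge critical if $\gamma_{c}(G)=k$ and $\gamma_{c}(G+uv)<k$ for every pair of non-adjacent vertices $u,v$. A $2$-connected graph $G$ is $k$-$\gamma_{c}$-vertex critical if $\gamma_{c}(G)=k$ and $\gamma_{c}(G-v)<k$ for every $v\in V(G)$. $G$ is maximal $k$-$\gamma_{c}$-vertex critical if it is both $k$-$\gamma_{c}$-edge critical and $k$-$\gamma_{c}$-vertex critical. For $l\geq 2$, the class $\mathcal{G}_{1}(l)$ consists of the graphs (unique up to isomorphism) on vertex set $\{v,q_{1},\dots,q_{l},z_{1},\dots,z_{l}\}$ whose edges are: $vz_{i}$ for all $i$; $q_{i}q_{j}$ for all $i\neq j$; and $z_{i}q_{j}$ for all $i\neq j$ (so $\{q_1,\dots,q_l\}$ is a clique, $\{z_1,\dots,z_l\}$ is independent, and $z_iq_i\notin E$). For $l=2$ this graph is $C_5$. *)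

From mathcomp Require Import all_boot.
Set Implicit Arguments. Unset Strict Implicit. Unset Printing Implicit Defensive.

Section Graphs.
Variable T : finType.
Implicit Types (e : rel T) (S D : {set T}).

Definition simple_graph e := symmetric e /\ irreflexive e.

Definition restr e S : rel T := [rel x y | [&& e x y, x \in S & y \in S]].

Definition connected_on e S : Prop :=
  forall x y, x \in S -> y \in S -> connect (restr e S) x y.

Definition is_cds_on e S D : bool :=
  [&& D \subset S,
      [forall x in S, (x \in D) || [exists y in D, e x y]] &
      [forall x in D, forall y in D, connect (restr e D) x y]].

Definition gamma_c_on e S : nat :=
  \big[minn/#|S|]_(D : {set T} | is_cds_on e S D) #|D|.

Definition gamma_c e : nat := gamma_c_on e [set: T].

Definition add_edge e (u v : T) : rel T :=
  [rel x y | [|| e x y, (x == u) && (y == v) | (x == v) && (y == u)]].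

Definition two_connected e : Prop :=
  3 <= #|T| /\ connected_on e [set: T] /\
  forall v : T, connected_on e (setT :\ v).

Definition edge_critical e (k : nat) : Prop :=
  gamma_c e = k /\
  forall u v : T, u != v -> ~~ e u v -> gamma_c (add_edge e u v) < k.

Definition vertex_critical e (k : nat) : Prop :=
  two_connected e /\ gamma_c e = k /\
  forall v : T, gamma_c_on e (setT :\ v) < k.

Definition maximal_vertex_critical e (k : nat) : Prop :=
  edge_critical e k /\ vertex_critical e k.

Definition independent e S : bool := [forall x in S, forall y in S, ~~ e x y].
Definition clique e S : bool :=
  [forall x in S, forall y in S, (x != y) ==> e x y].

Definition independence_number e : nat :=
  \max_(S : {set T} | independent e S) #|S|.
Definition clique_number e : nat :=
  \max_(S : {set T} | clique e S) #|S|.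

End Graphs.

(* The graph of class G_1(l): vertex None = v, Some (inl i) = q_i,
   Some (inr i) = z_i. *)
Definition G1_vertex (l : nat) := option ('I_l + 'I_l)%type.

Definition G1_rel (l : nat) : rel (G1_vertex l) :=
  fun a b =>
    match a, b with
    | None, Some (inr _) | Some (inr _), None => true
    | Some (inl i), Some (inl j) => i != j
    | Some (inr i), Some (inl j) | Some (inl j), Some (inr i) => i != j
    | _, _ => false
    end.

Definition in_G1 (T : finType) (e : rel T) (l : nat) : Prop :=
  exists f : T -> G1_vertex l, bijective f /\ forall x y, e x y = G1_rel (f x) (f y).

From mathcomp Require Import all_boot zify.
Set Implicit Arguments. Unset Strict Implicit. Unset Printing Implicit Defensive.

(* Take a maximum independent set I and a maximum clique K, and let O be the
   set of vertices outside I :|: K, so that alpha + omega = n - #|O| + #|I :&: K|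
   with #|I :&: K| <= 1.  As gamma_c = 3, no edge dominates G, while vertex
   criticality provides, for every v, an edge non-adjacent to v dominating G - v.
   Applied to the vertices of K this forces #|O| >= 1 when I and K are disjoint
   and #|O| >= 2 when they meet in x.  In the extremal case O = {y} these
   dominating edges determine every adjacency: y is adjacent exactly to I, and
   each vertex of K has exactly one non-neighbour in I, which is G_1(#|K|).
   The case #|O| = 2 reduces to it by moving one outsider into I or into K;
   edge criticality rules out the configuration in which neither move works. *)

Section Domination.
Variable T : finType.
Implicit Types (e : rel T) (S D : {set T}).

Definition dom2 e (a b w : T) := [|| w == a, w == b, e w a | e w b].

Lemma dom2C e a b w : dom2 e a b w = dom2 e b a w.
Proof. by rewrite /dom2; case: (w == a) (w == b) (e w a) (e w b) => [] [] [] []. Qed.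

Lemma dom2aa e a w : dom2 e a a w = (w == a) || e w a.
Proof. by rewrite /dom2 orbA !orbb. Qed.

Lemma independentP e S :
  reflect {in S &, forall a b, ~~ e a b} (independent e S).
Proof.
apply: (iffP forall_inP) => [H a b aS bS | H a aS]; first exact: forall_inP (H a aS) b bS.
by apply/forall_inP => b; apply: H.
Qed.

Lemma cliqueP e S :
  reflect {in S &, forall a b, a != b -> e a b} (clique e S).
Proof.
apply: (iffP forall_inP) => [H a b aS bS | H a aS].
  exact/implyP/(forall_inP (H a aS) b bS).
by apply/forall_inP => b bS; apply/implyP; apply: H.
Qed.

Lemma gamma_c_on_le e S D : is_cds_on e S D -> gamma_c_on e S <= #|D|.
Proof.
move=> cdsD; rewrite /gamma_c_on; elim: (index_enum _) (mem_index_enum D) => // D' r IHr.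
rewrite inE big_cons => /predU1P [<-|Dr]; first by rewrite cdsD geq_minl.
by case: ifP => _; rewrite ?geq_min IHr ?orbT.
Qed.

Lemma gamma_c_on_ltP e S k : gamma_c_on e S < k -> k <= #|S| ->
  exists2 D, is_cds_on e S D & #|D| < k.
Proof.
move=> lt_gk le_kS.
have [/exists_inP [D cdsD ltDk] | /exists_inP noD] :=
  boolP [exists (D | is_cds_on e S D), #|D| < k]; first by exists D.
suff : k <= gamma_c_on e S by rewrite leqNgt lt_gk.
apply: (big_ind (fun m => k <= m)) => // [m1 m2 h1 h2 | D cdsD].
  by rewrite leq_min h1 h2.
by rewrite leqNgt; apply/negP => ltDk; apply: noD; exists D.
Qed.

Lemma is_cds_on_pair e S a b : symmetric e -> (a == b) || e a b ->
  a \in S -> b \in S -> {in S, forall w, dom2 e a b w} -> is_cds_on e S [set a; b].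
Proof.
move=> esym hab aS bS domS; apply/and3P; split.
- by apply/subsetP => w; rewrite !inE => /orP [] /eqP ->.
- apply/forall_inP => w /domS; rewrite /dom2 !inE.
  case/or4P => [->|->|ewa|ewb]; rewrite ?orbT //; apply/orP; right; apply/existsP.
    by exists a; rewrite !inE eqxx ewa.
  by exists b; rewrite !inE eqxx ewb orbT.
- have [<-|ab] := eqVneq a b.
    apply/forall_inP => x; rewrite !inE orbb => /eqP ->.
    by apply/forall_inP => y; rewrite !inE orbb => /eqP ->.
  have eab : e a b by move: hab; rewrite (negbTE ab).
  apply/forall_inP => x; rewrite !inE => /orP [] /eqP ->;
  apply/forall_inP => y; rewrite !inE => /orP [] /eqP ->; try exact: connect0.
  all: by apply: connect1; rewrite /restr /= !inE !eqxx ?orbT ?eab // esym eab.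
Qed.

Lemma set_pair_of_card_le2 D : 0 < #|D| -> #|D| <= 2 -> exists a b, D = [set a; b].
Proof.
move=> D0 D2; have [/eqP/cards1P [a ->] | D1] := eqVneq #|D| 1.
  by exists a, a; rewrite setUid.
have /cards2P [a [b [_ ->]]] : #|D| == 2 by lia.
by exists a, b.
Qed.

Lemma connect_pair_edge e a b : irreflexive e -> a != b ->
  connect (restr e [set a; b]) a b -> e a b.
Proof.
move=> eirr ab /connectP [[|z p] /=]; first by move=> _ ba; rewrite ba eqxx in ab.
case/andP => /and3P [eaz _]; rewrite !inE => /orP [] /eqP zE _ _; last by rewrite -zE.
by rewrite zE eirr in eaz.
Qed.

Lemma cds_card_le2 e S D : irreflexive e -> S != set0 ->
  is_cds_on e S D -> #|D| <= 2 ->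
  exists a b, [/\ a \in S, b \in S, (a == b) || e a b & {in S, forall w, dom2 e a b w}].
Proof.
move=> eirr /set0Pn [s sS] /and3P [DS /forall_inP domD /forall_inP connD] D2.
have D0 : 0 < #|D|.
  apply/card_gt0P; case/orP: (domD s sS) => [sD | /existsP [d /andP [dD _]]].
    by exists s.
  by exists d.
have [a [b defD]] := set_pair_of_card_le2 D0 D2.
have aD : a \in D by rewrite defD !inE eqxx.
have bD : b \in D by rewrite defD !inE eqxx orbT.
exists a, b; split; [exact: subsetP DS a aD | exact: subsetP DS b bD | | ].
  have [//|ab /=] := eqVneq a b; apply: connect_pair_edge ab _ => //.
  by rewrite -defD; apply: (forall_inP (connD a aD)).
move=> w /domD; rewrite defD /dom2 !inE.
case/orP => [/orP [] -> // | /existsP [d]]; rewrite ?orbT //.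
by rewrite !inE => /andP [/orP [] /eqP -> ->]; rewrite !orbT.
Qed.

Lemma clique_nonneighbour_notin e (K : {set T}) v a : {in K &, forall a b, a != b -> e a b} ->
  v \in K -> ~~ e v a -> a != v -> a \notin K.
Proof. by move=> cliqK vK nva av; apply: contra nva => aK; rewrite cliqK // eq_sym. Qed.

(* What G + pq having a connected dominating set {p, r} of size <= 2 says about G. *)
Definition dom_partner e p q :=
  exists r, ((r == q) || e p r && ~~ e q r) /\ forall w, w != q -> dom2 e p r w.

Lemma add_edgeC e p q : add_edge e p q =2 add_edge e q p.
Proof. by move=> x y /=; congr (_ || _); rewrite orbC. Qed.

Lemma add_edge_sym e p q : symmetric e -> symmetric (add_edge e p q).
Proof.
move=> esym x y; rewrite /add_edge /= esym [(y == p) && _]andbC [(y == q) && _]andbC.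
by congr (_ || _); rewrite orbC.
Qed.

Lemma add_edge_irr e p q : irreflexive e -> p != q -> irreflexive (add_edge e p q).
Proof.
move=> eirr pq x; rewrite /add_edge /= eirr; have [->|xp] := eqVneq x p; last by rewrite andbF.
by rewrite (negbTE pq) andbF.
Qed.

Lemma add_edge_off e p q w a : a != p -> a != q -> add_edge e p q w a = e w a.
Proof. by move=> ap aq; rewrite /add_edge /= (negbTE ap) (negbTE aq) !andbF !orbF. Qed.

Lemma dom2_add_edge_off e p q a b w : a != p -> a != q -> b != p -> b != q ->
  dom2 (add_edge e p q) a b w = dom2 e a b w.
Proof. by move=> ap aq bp bq; rewrite /dom2 !add_edge_off. Qed.

Lemma dom2_add_edge e p q b w : w != q -> dom2 (add_edge e p q) p b w = dom2 e p b w.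
Proof.
move=> wq; rewrite /dom2 /add_edge /= (negbTE wq) /= !orbF.
by case: (w == p) => //=; rewrite !orbF.
Qed.

Lemma G1_twin_free l (a b : G1_vertex l) : G1_rel a =1 G1_rel b -> a = b.
Proof.
case: a b => [[i|i]|] [[j|j]|] //= nab.
all: first [ by move: (nab None) | by move: (nab (Some (inr i))) => /=; rewrite eqxx
  | by move: (nab (Some (inr j))) => /=; rewrite eqxx
  | by move: (nab (Some (inl i))) => /=; rewrite eqxx; case: (eqVneq j i) => // -> ].
Qed.

Lemma in_G1_of_embedding e l (h : G1_vertex l -> T) :
  (forall a b, e (h a) (h b) = G1_rel a b) -> (forall x, exists a, h a = x) -> in_G1 e l.
Proof.
move=> hE hsurj.
have hinj : injective h by move=> a b hab; apply: G1_twin_free => c; rewrite -!hE hab.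
pose f x := odflt None [pick a | h a == x].
have fK : cancel f h.
  move=> x; rewrite /f; case: pickP => [a /eqP //|none].
  by have [a ha] := hsurj x; move: (none a); rewrite ha eqxx.
exists f; split; first by exists h => // a; apply: hinj; rewrite fK.
by move=> x z; rewrite -hE !fK.
Qed.

Lemma independence_number_attained e :
  exists2 S, independent e S & independence_number e = #|S|.
Proof.
have [|S] := @eq_bigmax_cond _ [pred S | independent e S] (fun S => #|S|); last by exists S.
by apply/card_gt0P; exists set0; rewrite inE; apply/independentP => a b; rewrite inE.
Qed.

Lemma clique_number_attained e : exists2 S, clique e S & clique_number e = #|S|.
Proof.
have [|S] := @eq_bigmax_cond _ [pred S | clique e S] (fun S => #|S|); last by exists S.
by apply/card_gt0P; exists set0; rewrite inE; apply/cliqueP => a b; rewrite inE.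
Qed.

Lemma clique_number_ge2 e a b : symmetric e -> irreflexive e -> e a b -> 2 <= clique_number e.
Proof.
move=> esym eirr eab; have ab : a != b by apply: contraTneq eab => ->; rewrite eirr.
have cliq_ab : clique e [set a; b].
  apply/cliqueP => x y; rewrite !inE => /orP [] /eqP -> /orP [] /eqP ->;
  by rewrite ?eqxx // esym.
by apply: leq_trans (leq_bigmax_cond (F := fun S => #|S|) _ cliq_ab); rewrite cards2 ab.
Qed.

Lemma in_G1_bounds e l : in_G1 e l ->
  [/\ #|T| = (l + l).+1, l <= independence_number e & l <= clique_number e].
Proof.
case=> f [fbij fE]; have [g fK gK] := fbij.
pose Z := [set g (Some (inr i)) | i : 'I_l]; pose Q := [set g (Some (inl i)) | i : 'I_l].
have cardZ : #|Z| = l by rewrite card_imset ?card_ord // => i j /(can_inj gK) [].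
have cardQ : #|Q| = l by rewrite card_imset ?card_ord // => i j /(can_inj gK) [].
split; first by rewrite (bij_eq_card fbij) card_option card_sum card_ord.
  rewrite -cardZ; apply: (leq_bigmax_cond (F := fun S => #|S|)).
  by apply/independentP => _ _ /imsetP [i _ ->] /imsetP [j _ ->]; rewrite fE !gK.
rewrite -cardQ; apply: (leq_bigmax_cond (F := fun S => #|S|)).
apply/cliqueP => _ _ /imsetP [i _ ->] /imsetP [j _ ->]; rewrite fE !gK /=.
by apply: contraNneq => ->.
Qed.

End Domination.

Section MaximalCritical.
Variables (T : finType) (e : rel T).
Hypotheses (esym : symmetric e) (eirr : irreflexive e)
  (conn : connected_on e [set: T]) (gc3 : gamma_c e = 3)
  (edge_crit : forall p q, p != q -> ~~ e p q -> gamma_c (add_edge e p q) < 3)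
  (card3 : 3 <= #|T|) (conn_del : forall v, connected_on e (setT :\ v))
  (vertex_crit : forall v, gamma_c_on e (setT :\ v) < 3).

Lemma exists_neighbour w : exists z, e w z.
Proof.
have /card_gt0P [x] : 0 < #|[set~ w]| by rewrite cardsC1; lia.
rewrite !inE => xw; case/connectP: (conn (in_setT w) (in_setT x)) => [[|z p] /=].
  by move=> _ xE; rewrite xE eqxx in xw.
by case/andP => /andP [ewz _] _ _; exists z.
Qed.

Lemma card_ge4 : 4 <= #|T|.
Proof.
have /card_gt0P [v _] : 0 < #|T| by lia.
suff : 3 <= #|[set: T] :\ v| by have := cardsD1 v [set: T]; rewrite in_setT cardsT; lia.
rewrite -gc3; apply: gamma_c_on_le; apply/and3P; split; first exact: subsetT.
  apply/forall_inP => x _; rewrite !inE andbT; have [-> /=|//] := eqVneq x v.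
  have [z evz] := exists_neighbour v; apply/existsP; exists z.
  by rewrite !inE evz !andbT; move: evz; apply: contraTneq => ->; rewrite eirr.
by apply/forall_inP => x xD; apply/forall_inP => y yD; apply: conn_del.
Qed.

Lemma edge_not_dominating a b : e a b -> exists w, ~~ dom2 e a b w.
Proof.
move=> eab; apply/existsP; rewrite -negb_forall; apply/negP => /forallP domab.
have cds_ab : is_cds_on e [set: T] [set a; b].
  by apply: is_cds_on_pair; rewrite ?in_setT ?eab ?orbT.
by have := gamma_c_on_le cds_ab; rewrite -/(gamma_c e) gc3 cards2; case: (a != b).
Qed.

Lemma edge_dominating_but v a b :
  e a b -> (forall w, w != v -> dom2 e a b w) -> ~~ dom2 e a b v.
Proof.
move=> eab domab; have [w ndom] := edge_not_dominating eab.
by have [<- //|wv] := eqVneq w v; rewrite domab in ndom.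
Qed.

Lemma vertex_dominating_but v a : ~ (forall w, w != v -> dom2 e a a w).
Proof.
move=> doma; have dom_a z w : dom2 e a a w -> dom2 e a z w.
  by rewrite dom2aa /dom2 => /orP [] ->; rewrite ?orbT.
suff [z eaz domz] : exists2 z, e a z & forall w, dom2 e a z w.
  by have [w] := edge_not_dominating eaz; rewrite domz.
have [domv | ndomv] := boolP (dom2 e a a v).
  have [z eaz] := exists_neighbour a; exists z => // w; apply: dom_a.
  by have [->|] := eqVneq w v; [exact: domv | exact: doma].
have [z evz] := exists_neighbour v.
have zv : z != v by move: evz; apply: contraTneq => ->; rewrite eirr.
have eza : e z a.
  move: (doma z zv) ndomv; rewrite !dom2aa.
  by case/orP => [/eqP za|->//]; rewrite -za evz orbT.
exists z; first by rewrite esym.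
move=> w; have [->|wv] := eqVneq w v; last exact/dom_a/doma.
by rewrite /dom2 evz !orbT.
Qed.

Lemma vertex_deleted_pair v : exists a b, e a b /\
  [/\ ~~ e v a, ~~ e v b, a != v, b != v & forall w, w != v -> dom2 e a b w].
Proof.
have S3 : 3 <= #|[set: T] :\ v|.
  by have := cardsD1 v [set: T]; rewrite in_setT cardsT; have := card_ge4; lia.
have [D cdsD D2] := gamma_c_on_ltP (vertex_crit v) S3.
have S0 : [set: T] :\ v != set0 by rewrite -card_gt0; lia.
have [a [b [_ _ hab domab]]] := cds_card_le2 eirr S0 cdsD D2.
have {}domab w : w != v -> dom2 e a b w by move=> wv; apply: domab; rewrite !inE wv.
have [ab|ab] := eqVneq a b; first by rewrite -ab in domab; case: (vertex_dominating_but domab).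
have eab : e a b by rewrite (negbTE ab) in hab.
have := edge_dominating_but eab domab; rewrite /dom2 !negb_or => /and4P [va vb nva nvb].
by exists a, b; split; last split; rewrite 1?eq_sym.
Qed.

Lemma added_edge_partner p q b : p != q -> (p == b) || add_edge e p q p b ->
  (forall w, dom2 (add_edge e p q) p b w) -> dom_partner e p q.
Proof.
move=> pq hb domb.
have {}domb w : w != q -> dom2 e p b w by move=> wq; rewrite -(dom2_add_edge e p b wq).
have [bq|bq] := eqVneq b q; first by subst b; exists q; rewrite eqxx.
have [bp|bp] := eqVneq b p; first by rewrite bp in domb; case: (vertex_dominating_but domb).
have epb : e p b by move: hb; rewrite eq_sym (negbTE bp) add_edge_off.
have := edge_dominating_but epb domb; rewrite /dom2 !negb_or => /and4P [_ _ _ nqb].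
by exists b; rewrite epb nqb orbT.
Qed.

Lemma added_edge_pair p q : p != q -> ~~ e p q -> dom_partner e p q \/ dom_partner e q p.
Proof.
move=> pq npq.
have [a [b [hab domab]]] : exists a b,
    ((a == b) || add_edge e p q a b) /\ forall w, dom2 (add_edge e p q) a b w.
  have S3 : 3 <= #|[set: T]| by rewrite cardsT.
  have [D cdsD D2] := gamma_c_on_ltP (edge_crit pq npq) S3.
  have [|a [b [_ _ hab domab]]] := cds_card_le2 (add_edge_irr eirr pq) _ cdsD D2.
    by apply/set0Pn; exists p.
  by exists a, b; split=> // w; apply: domab.
wlog apq : a b hab domab / (a == p) || (a == q).
  move=> W; have [apq|napq] := boolP ((a == p) || (a == q)); first exact: W a b hab domab apq.
  have [bpq|] := boolP ((b == p) || (b == q)).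
    apply: (W b a) => // [|w]; last by rewrite dom2C.
    by rewrite eq_sym (add_edge_sym p q esym).
  move: napq; rewrite !negb_or => /andP [ap aq] /andP [bp bq].
  rewrite add_edge_off // in hab.
  have {}domab w : dom2 e a b w by rewrite -(dom2_add_edge_off e w ap aq bp bq).
  have [ab|ab] := eqVneq a b.
    by rewrite -ab in domab; case: (vertex_dominating_but (v:=p) (fun w _ => domab w)).
  rewrite (negbTE ab) in hab.
  by have [w] := edge_not_dominating hab; rewrite domab.
case/orP: apq => /eqP aE; subst a; first by left; apply: added_edge_partner hab domab.
right; apply: (@added_edge_partner q p b); first by rewrite eq_sym.
  by rewrite -(add_edgeC e p q).
by move=> w; move: (domab w); rewrite /dom2 !(add_edgeC e p q).
Qed.

Section OneOutsider.
Variables (I K : {set T}) (y : T).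
Hypotheses (indI : {in I &, forall a b, ~~ e a b})
  (cliqK : {in K &, forall a b, a != b -> e a b})
  (cover : forall x, [|| x == y, x \in K | x \in I])
  (yI : y \notin I) (yK : y \notin K) (IK : forall x, x \in I -> x \notin K)
  (K0 : K != set0).

Lemma outsider_pair v : v \in K -> exists t,
  [/\ t \in I, e y t, ~~ e v t, ~~ e v y & forall w, w != v -> dom2 e y t w].
Proof.
move=> vK; have [a [b [eab [nva nvb av bv domab]]]] := vertex_deleted_pair v.
have aK := clique_nonneighbour_notin cliqK vK nva av.
have bK := clique_nonneighbour_notin cliqK vK nvb bv.
move: (cover a) (cover b); rewrite (negbTE aK) (negbTE bK) /=.
case/orP => [/eqP aE | aI]; case/orP => [/eqP bE | bI].
- by rewrite aE bE eirr in eab.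
- by exists b; rewrite -aE.
- by exists a; rewrite -bE esym; split=> // w /domab; rewrite dom2C.
- by rewrite (negbTE (indI aI bI)) in eab.
Qed.

Lemma outsider_nonadj v : v \in K -> ~~ e y v.
Proof. by case/outsider_pair => t [_ _ _ nvy _]; rewrite esym. Qed.

Lemma exists_mate v : v \in K -> exists t,
  [/\ t \in I, e y t, ~~ e v t & {in K, forall k, k != v -> e t k}].
Proof.
move=> vK; have [t [tI eyt nvt _ domyt]] := outsider_pair vK; exists t; split=> // k kK kv.
case/or4P: (domyt k kv) => [/eqP kE | /eqP kE | eky | ekt]; last by rewrite esym.
- by move: yK; rewrite -kE kK.
- by move: (IK tI); rewrite -kE kK.
- by rewrite esym (negbTE (outsider_nonadj kK)) in eky.
Qed.

Lemma indep_adj_outsider u : u \in I -> e u y.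
Proof.
move=> uI; have /set0Pn [k0 k0K] := K0.
have [t [tI eyt _ _ domyt]] := outsider_pair k0K.
have [-> | ut] := eqVneq u t; first by rewrite esym.
have uk0 : u != k0 by apply: contraNneq (IK uI) => ->.
case/or4P: (domyt u uk0) => [/eqP uy | /eqP ut' | // | eut].
- by move: yI; rewrite -uy uI.
- by rewrite ut' eqxx in ut.
- by rewrite (negbTE (indI uI tI)) in eut.
Qed.

Lemma indep_nonneighbour u : u \in I ->
  exists k, [/\ k \in K, ~~ e u k & {in I, forall w, w != u -> e w k}].
Proof.
move=> uI; have [a [b [eab [nua nub au bu domab]]]] := vertex_deleted_pair u.
have euy := indep_adj_outsider uI.
have ay : a != y by apply: contraNneq nua => ->.
have bY : b != y by apply: contraNneq nub => ->.
wlog aK : a b eab nua nub au bu domab ay bY / a \in K.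
  move=> W; have [aK | aK] := boolP (a \in K); first exact: (W a b).
  apply: (W b a) => //; first by rewrite esym.
    by move=> w /domab; rewrite dom2C.
  move: (cover a) (cover b); rewrite (negbTE ay) (negbTE aK) (negbTE bY) /= => aI.
  by case/orP => // bI; rewrite (negbTE (indI aI bI)) in eab.
have eyb : e y b.
  have yu : y != u by apply: contraNneq yI => ->.
  move: (domab y yu); rewrite /dom2 (negbTE (outsider_nonadj aK)).
  by rewrite eq_sym (negbTE ay) eq_sym (negbTE bY).
have bI : b \in I.
  move: (cover b); rewrite (negbTE bY) /=; case/orP => // bK.
  by rewrite (negbTE (outsider_nonadj bK)) in eyb.
exists a; split=> // w wI wu; case/or4P: (domab w wu) => [/eqP wa | /eqP -> | // | ewb].
- by move: (IK wI); rewrite wa aK.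
- by rewrite esym.
- by rewrite (negbTE (indI wI bI)) in ewb.
Qed.

Lemma nonneighbour_adj_rest v u : v \in K -> u \in I -> ~~ e u v ->
  {in K, forall k, k != v -> e u k}.
Proof.
move=> vK uI nuv k kK kv; have [t [tI _ nvt tK]] := exists_mate vK.
have [-> | ut] := eqVneq u t; first exact: tK.
have [k1 [k1K ntk1 k1I]] := indep_nonneighbour tI.
have [k1v | k1v] := eqVneq k1 v; last by rewrite tK in ntk1.
by rewrite -k1v k1I in nuv.
Qed.

Lemma nonneighbour_unique v u1 u2 : v \in K -> u1 \in I -> u2 \in I ->
  ~~ e u1 v -> ~~ e u2 v -> u1 = u2.
Proof.
move=> vK u1I u2I n1 n2; have [k [kK nk kI]] := indep_nonneighbour u1I.
have [kv | kv] := eqVneq k v; last by rewrite (nonneighbour_adj_rest vK u1I n1 kK kv) in nk.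
by apply/eqP; apply: contraNT n2; rewrite eq_sym -kv => /(kI _ u2I).
Qed.

Definition mate v := odflt y [pick u in I | ~~ e u v].

Lemma mateP v : v \in K -> mate v \in I /\ ~~ e (mate v) v.
Proof.
move=> vK; rewrite /mate; case: pickP => [u /andP [] // | none].
have [t [tI _ nvt _]] := exists_mate vK.
by move: (none t); rewrite /= tI esym nvt.
Qed.

Definition G1_embed (a : G1_vertex #|K|) : T :=
  match a with
  | None => y
  | Some (inl i) => enum_val i
  | Some (inr i) => mate (enum_val i)
  end.

Lemma G1_embedE a b : e (G1_embed a) (G1_embed b) = G1_rel a b.
Proof.
have evK (i : 'I_#|K|) : enum_val i \in K := enum_valP i.
have qq (i j : 'I_#|K|) : e (enum_val i) (enum_val j) = (i != j).
  have [<- | ij] := eqVneq i j; first exact: eirr.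
  by apply: cliqK; rewrite ?evK // (inj_eq enum_val_inj).
have zI (i : 'I_#|K|) : mate (enum_val i) \in I := (mateP (evK i)).1.
have zq (i j : 'I_#|K|) : e (mate (enum_val i)) (enum_val j) = (i != j).
  have [_ nz] := mateP (evK i).
  have [<- | ij] := eqVneq i j; first exact/negbTE.
  apply: (nonneighbour_adj_rest (evK i) (zI i) nz (evK j)).
  by rewrite (inj_eq enum_val_inj) eq_sym.
case: a b => [[i|i]|] [[j|j]|] /=.
- exact: qq.
- by rewrite esym zq.
- by rewrite esym; apply/negbTE/outsider_nonadj/evK.
- exact: zq.
- exact/negbTE/indI/zI/zI.
- exact/indep_adj_outsider/zI.
- exact/negbTE/outsider_nonadj/evK.
- by rewrite esym indep_adj_outsider ?zI.
- exact: eirr.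
Qed.

Lemma G1_embed_surj x : exists a, G1_embed a = x.
Proof.
case/or3P: (cover x) => [/eqP -> | xK | xI]; first by exists None.
  by exists (Some (inl (enum_rank_in xK x))); rewrite /= enum_rankK_in.
have [k [kK nxk _]] := indep_nonneighbour xI.
exists (Some (inr (enum_rank_in kK k))); rewrite /= enum_rankK_in //.
by have [zI nz] := mateP kK; apply: nonneighbour_unique kK zI xI nz nxk.
Qed.

Lemma one_outsider_in_G1 : in_G1 e #|K|.
Proof. exact: in_G1_of_embedding G1_embedE G1_embed_surj. Qed.

End OneOutsider.

Section TwoOutsiders.
Variables (I K : {set T}) (x y1 y2 : T).
Hypotheses (indI : {in I &, forall a b, ~~ e a b})
  (cliqK : {in K &, forall a b, a != b -> e a b})
  (xI : x \in I) (xK : x \in K) (IKx : forall w, w \in I -> w \in K -> w = x)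
  (cover : forall w, [|| w == y1, w == y2, w \in K | w \in I])
  (y1I : y1 \notin I) (y1K : y1 \notin K) (y2I : y2 \notin I) (y2K : y2 \notin K)
  (y12 : y1 != y2) (nxy2 : ~~ e x y2)
  (nadjK_y1 : {in K, forall k, k != x -> ~~ e k y1})
  (adjI_y2 : {in I, forall w, w != x -> e w y2}).

Section Contradiction.
Variables (v u : T).
Hypotheses (vK : v \in K) (vx : v != x) (nvy2 : ~~ e v y2)
  (uI : u \in I) (ux : u != x) (euy1 : e u y1).

Lemma clique_vertex_misses_indep k : k \in K -> ~ {in I, forall w, w != x -> e w k}.
Proof.
move=> kK Ik; have eku : e k u by rewrite esym Ik.
have [w /negP] := edge_not_dominating eku; apply; rewrite /dom2.
case/or4P: (cover w) => [/eqP -> | /eqP -> | wK | wI].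
- by rewrite [e y1 u]esym euy1 !orbT.
- by rewrite [e y2 u]esym adjI_y2 // !orbT.
- by have [// | wk] := eqVneq w k; rewrite cliqK ?orbT.
- have [wx | wx] := eqVneq w x; last by rewrite Ik ?orbT.
  by have [// | wk] := eqVneq w k; rewrite cliqK ?orbT // wx.
Qed.

Lemma outsiders_adj_of_partner_v : dom_partner e v y2 -> e y1 y2.
Proof.
case=> r [hr domr]; have y1v : y1 != v by apply: contraNneq y1K => ->.
have nvy1 : ~~ e y1 v by rewrite esym nadjK_y1.
case/orP: hr => [/eqP rE | /andP [evr nry2]].
  by move: (domr y1 y12); rewrite /dom2 rE (negbTE y1v) (negbTE y12) (negbTE nvy1).
have ey1r : e y1 r.
  case/or4P: (domr y1 y12) => [/eqP y1v' | /eqP y1r | ey1v | //].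
  - by rewrite y1v' eqxx in y1v.
  - by rewrite -y1r esym (negbTE nvy1) in evr.
  - by rewrite ey1v in nvy1.
have [rx | rx] := eqVneq r x.
  case: (clique_vertex_misses_indep vK) => w wI wx.
  have wy2 : w != y2 by apply: contraNneq y2I => <-.
  case/or4P: (domr w wy2) => [/eqP wv | /eqP wr | // | ewr].
  - by move: wx; rewrite (IKx wI) ?eqxx // wv.
  - by rewrite wr rx eqxx in wx.
  - by rewrite rx (negbTE (indI wI xI)) in ewr.
case/or4P: (cover r) => [/eqP rE | /eqP rE | rK | rI].
- by rewrite rE eirr in ey1r.
- by rewrite rE (negbTE nvy2) in evr.
- by rewrite esym (negbTE (nadjK_y1 rK rx)) in ey1r.
- by rewrite esym adjI_y2 in nry2.
Qed.

Lemma outsiders_adj_of_partner_y2 : dom_partner e y2 v -> e y1 y2.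
Proof.
case=> r [hr domr]; case/orP: hr => [/eqP rv | /andP [ey2r nvr]].
  have y1v : y1 != v by apply: contraNneq y1K => ->.
  move: (domr y1 y1v); rewrite /dom2 rv (negbTE y12) (negbTE y1v) /=.
  by case/orP => // ey1v; rewrite esym (negbTE (nadjK_y1 vK vx)) in ey1v.
have xy2 : x != y2 by apply: contraNneq y2K => <-.
have exr : e x r.
  have xv : x != v by rewrite eq_sym.
  case/or4P: (domr x xv) => [/eqP xy2' | /eqP xr | exy2 | //].
  - by rewrite xy2' eqxx in xy2.
  - by rewrite -xr esym (negbTE nxy2) in ey2r.
  - by move: nxy2; rewrite exy2.
case/or4P: (cover r) => [/eqP rE | /eqP rE | rK | rI].
- by rewrite -rE esym.
- by rewrite rE eirr in ey2r.
- have [rv | rv] := eqVneq r v; first by rewrite rv esym (negbTE nvy2) in ey2r.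
  by rewrite cliqK // eq_sym in nvr.
- by rewrite (negbTE (indI xI rI)) in exr.
Qed.

Lemma outsiders_adjacent : e y1 y2.
Proof.
have vy2 : v != y2 by apply: contraNneq y2K => <-.
have [] := added_edge_pair vy2 nvy2.
  exact: outsiders_adj_of_partner_v.
exact: outsiders_adj_of_partner_y2.
Qed.

Lemma y2_dominating_pair_misses_y1 a b : e a b -> ~~ e y2 a -> ~~ e y2 b ->
  a != y2 -> b != y2 -> (forall w, w != y2 -> dom2 e a b w) -> ~~ e y1 a.
Proof.
move=> eab ny2a ny2b ay2 by2 domab; apply/negP => ey1a.
have ax : a = x.
  case/or4P: (cover a) => [/eqP aE | /eqP aE | aK | aI].
  - by rewrite aE eirr in ey1a.
  - by rewrite aE eqxx in ay2.
  - by apply/eqP; apply: contraTT ey1a => ax; rewrite esym nadjK_y1.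
  - by apply/eqP; apply: contraNT ny2a => ax; rewrite esym adjI_y2.
subst a; case/or4P: (cover b) => [/eqP bE | /eqP bE | bK | bI].
- by rewrite bE esym outsiders_adjacent in ny2b.
- by rewrite bE eqxx in by2.
- case: (clique_vertex_misses_indep bK) => w wI wx.
  have wy2 : w != y2 by apply: contraNneq y2I => <-.
  case/or4P: (domab w wy2) => [/eqP wx' | /eqP wb | ewx | //].
  - by rewrite wx' eqxx in wx.
  - by move: wx; rewrite (IKx wI) ?eqxx // wb.
  - by rewrite (negbTE (indI wI xI)) in ewx.
- by rewrite (negbTE (indI xI bI)) in eab.
Qed.

Lemma two_outsiders_contra : False.
Proof.
have [a [b [eab [ny2a ny2b ay2 by2 domab]]]] := vertex_deleted_pair y2.
have ny1a := y2_dominating_pair_misses_y1 eab ny2a ny2b ay2 by2 domab.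
have ny1b : ~~ e y1 b.
  apply: (@y2_dominating_pair_misses_y1 b a) => //; first by rewrite esym.
  by move=> w /domab; rewrite dom2C.
case/or4P: (domab y1 y12) => [/eqP y1a | /eqP y1b | ey1a | ey1b].
- by rewrite -y1a esym outsiders_adjacent in ny2a.
- by rewrite -y1b esym outsiders_adjacent in ny2b.
- by rewrite ey1a in ny1a.
- by rewrite ey1b in ny1b.
Qed.

End Contradiction.

Lemma two_outsiders_split :
  {in K, forall k, k != x -> e k y2} \/ {in I, forall w, w != x -> ~~ e w y1}.
Proof.
have [/forall_inP Ky2 | /forall_inPn [v vK]] := boolP [forall k in K, (k != x) ==> e k y2].
  by left=> k kK; apply/implyP/Ky2.
rewrite negb_imply => /andP [vx nvy2].
have [/forall_inP Iy1 | /forall_inPn [u uI]] := boolP [forall w in I, (w != x) ==> ~~ e w y1].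
  by right=> w wI; apply/implyP/Iy1.
rewrite negb_imply negbK => /andP [ux euy1].
by case: (two_outsiders_contra vK vx nvy2 uI ux euy1).
Qed.

Lemma in_G1_of_swap_into_clique :
  {in K, forall k, k != x -> e k y2} -> in_G1 e #|K|.
Proof.
move=> Ky2; have -> : #|K| = #|y2 |: (K :\ x)|.
  by rewrite cardsU1 in_setD1 (negbTE y2K) andbF (cardsD1 x K) xK.
apply: (@one_outsider_in_G1 I _ y1) => //.
- move=> a b; rewrite !in_setU1 !in_setD1.
  case/orP => [/eqP-> | /andP [ax aK]]; case/orP => [/eqP-> | /andP [bx bK]].
  + by rewrite eqxx.
  + by move=> _; rewrite esym; apply: Ky2.
  + by move=> _; apply: Ky2.
  + exact: cliqK.
- move=> w; rewrite in_setU1 in_setD1.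
  case/or4P: (cover w) => [-> | -> | wK | ->]; rewrite ?orbT //.
  by have [-> | _] := eqVneq w x; rewrite ?xI ?wK ?orbT.
- by rewrite in_setU1 in_setD1 (negbTE y12) (negbTE y1K) andbF.
- move=> w wI; rewrite in_setU1 in_setD1 negb_or; apply/andP; split.
    by apply: contraNneq y2I => <-.
  by apply/negP => /andP [wx wK]; rewrite (IKx wI wK) eqxx in wx.
- by apply/set0Pn; exists y2; rewrite setU11.
Qed.

Lemma in_G1_of_swap_into_indep :
  {in I, forall w, w != x -> ~~ e w y1} -> in_G1 e #|K|.
Proof.
move=> Iy1; apply: (@one_outsider_in_G1 (y1 |: (I :\ x)) K y2) => //.
- move=> a b; rewrite !in_setU1 !in_setD1.
  case/orP => [/eqP-> | /andP [ax aI]]; case/orP => [/eqP-> | /andP [bx bI]].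
  + by rewrite eirr.
  + by rewrite esym; apply: Iy1.
  + exact: Iy1.
  + exact: indI.
- move=> w; rewrite in_setU1 in_setD1.
  case/or4P: (cover w) => [-> | -> | -> | wI]; rewrite ?orbT //.
  by have [-> | _] := eqVneq w x; rewrite ?xK ?wI ?orbT.
- by rewrite in_setU1 in_setD1 eq_sym (negbTE y12) (negbTE y2I) andbF.
- move=> w; rewrite in_setU1 in_setD1; case/orP => [/eqP -> // | /andP [wx wI]].
  by apply/negP => wK; rewrite (IKx wI wK) eqxx in wx.
- by apply/set0Pn; exists x.
Qed.

Lemma two_outsiders_in_G1 : in_G1 e #|K|.
Proof.
by case: two_outsiders_split => [/in_G1_of_swap_into_clique | /in_G1_of_swap_into_indep].
Qed.

End TwoOutsiders.

Section IndepClique.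
Variables (I K : {set T}).
Hypotheses (indI : {in I &, forall a b, ~~ e a b})
  (cliqK : {in K &, forall a b, a != b -> e a b}).

Let O := ~: (I :|: K).

Lemma in_outside w : (w \in O) = (w \notin I) && (w \notin K).
Proof. by rewrite !inE negb_or. Qed.

Lemma outside_cover w : w \notin O -> (w \in K) || (w \in I).
Proof. by rewrite in_outside negb_and !negbK orbC. Qed.

Lemma card_indep_clique : #|I| + #|K| + #|O| = #|T| + #|I :&: K|.
Proof. by have := cardsUI I K; have := cardsC (I :|: K); rewrite /O; lia. Qed.

Lemma indep_clique_meet x : x \in I -> x \in K -> I :&: K = [set x].
Proof.
move=> xI xK; apply/setP => w; rewrite !inE.
apply/andP/eqP => [[wI wK] | ->] //; apply/eqP; apply: contraNT (indI wI xI) => wx.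
exact: cliqK.
Qed.

Section Disjoint.
Hypotheses (IK0 : I :&: K = set0) (K0 : K != set0).

Lemma disjoint_notin_clique w : w \in I -> w \notin K.
Proof. by move=> wI; apply/negP => wK; have := in_set0 w; rewrite -IK0 inE wI wK. Qed.

Lemma disjoint_outside_gt0 : 0 < #|O|.
Proof.
have /set0Pn [v vK] := K0; have [a [b [eab [nva nvb av bv _]]]] := vertex_deleted_pair v.
have aK := clique_nonneighbour_notin cliqK vK nva av.
have bK := clique_nonneighbour_notin cliqK vK nvb bv.
apply/card_gt0P; have [aI | aI] := boolP (a \in I); last by exists a; rewrite in_outside aI aK.
have [bI | bI] := boolP (b \in I); last by exists b; rewrite in_outside bI bK.
by rewrite (negbTE (indI aI bI)) in eab.
Qed.

Lemma disjoint_outside1_in_G1 : #|O| = 1 -> in_G1 e #|K|.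
Proof.
move/eqP/cards1P => [y Oy]; have : y \in O by rewrite Oy set11.
rewrite in_outside => /andP [yI yK].
apply: (one_outsider_in_G1 indI cliqK _ yI yK disjoint_notin_clique K0) => w.
have [wO | /outside_cover ->] := boolP (w \in O); last by rewrite orbT.
by move: wO; rewrite Oy inE => ->.
Qed.

End Disjoint.

Section Meet.
Variable x : T.
Hypotheses (xI : x \in I) (xK : x \in K).

Lemma meet_only w : w \in I -> w \in K -> w = x.
Proof. by move=> wI wK; apply/set1P; rewrite -(indep_clique_meet xI xK) inE wI wK. Qed.

Lemma meet_pair : exists y2 z, [/\ y2 \in O, e y2 z, ~~ e x y2, ~~ e x z &
  forall w, w != x -> dom2 e y2 z w].
Proof.
have [a [b [eab [nxa nxb ax bx domab]]]] := vertex_deleted_pair x.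
have aK := clique_nonneighbour_notin cliqK xK nxa ax.
have bK := clique_nonneighbour_notin cliqK xK nxb bx.
have [aI | aI] := boolP (a \in I); last by exists a, b; rewrite in_outside aI aK.
have [bI | bI] := boolP (b \in I); first by rewrite (negbTE (indI aI bI)) in eab.
exists b, a; split=> //; first by rewrite in_outside bI bK.
  by rewrite esym.
by move=> w /domab; rewrite dom2C.
Qed.

Lemma meet_private v : v \in K -> v != x -> exists t, [/\ t \in O, e x t & ~~ e v t].
Proof.
move=> vK vx; have [a [b [eab [nva nvb av bv domab]]]] := vertex_deleted_pair v.
have evx : e v x by apply: cliqK.
have notI t : e x t -> t \notin I by move=> ext; apply: contraTN ext => /(indI xI).
have xv : x != v by rewrite eq_sym.
case/or4P: (domab x xv) => [/eqP xa | /eqP xb | exa | exb].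
- by rewrite -xa evx in nva.
- by rewrite -xb evx in nvb.
- by exists a; rewrite in_outside notI // (clique_nonneighbour_notin cliqK vK nva av).
- by exists b; rewrite in_outside notI // (clique_nonneighbour_notin cliqK vK nvb bv).
Qed.

Hypothesis K2 : 2 <= #|K|.

Lemma meet_outsiders : exists y1 y2 z,
  [/\ y1 \in O, y2 \in O, e x y1, ~~ e x y2 & [/\ e y2 z, ~~ e x z &
  forall w, w != x -> dom2 e y2 z w]].
Proof.
have /card_gt0P [v] : 0 < #|K :\ x| by have := cardsD1 x K; rewrite xK; lia.
rewrite in_setD1 => /andP [vx vK].
have [y1 [y1O exy1 _]] := meet_private vK vx.
have [y2 [z [y2O eyz nxy2 nxz domyz]]] := meet_pair.
by exists y1, y2, z.
Qed.

Lemma meet_outside_ge2 : 2 <= #|O|.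
Proof.
have [y1 [y2 [_ [y1O y2O exy1 nxy2 _]]]] := meet_outsiders.
have y12 : y1 != y2 by apply: contraTneq exy1 => ->.
suff : #|[set y1; y2]| <= #|O| by rewrite cards2 y12.
by apply/subset_leq_card/subsetP => w; rewrite in_set2 => /orP [] /eqP ->.
Qed.

Lemma meet_outside2_in_G1 : #|O| = 2 -> in_G1 e #|K|.
Proof.
move=> O2; have [y1 [y2 [z [y1O y2O exy1 nxy2 [eyz nxz domyz]]]]] := meet_outsiders.
have y12 : y1 != y2 by apply: contraTneq exy1 => ->.
have Oy : O = [set y1; y2].
  apply/eqP; rewrite eq_sym eqEcard cards2 y12 O2 andbT.
  by apply/subsetP => w; rewrite in_set2 => /orP [] /eqP ->.
have cover w : [|| w == y1, w == y2, w \in K | w \in I].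
  have [wO | /outside_cover ->] := boolP (w \in O); last by rewrite !orbT.
  by move: wO; rewrite Oy !inE => /orP [] ->; rewrite ?orbT.
move: y1O y2O; rewrite !in_outside => /andP [y1I y1K] /andP [y2I y2K].
have nadjK_y1 : {in K, forall k, k != x -> ~~ e k y1}.
  move=> k kK kx; have [t [tO ext nkt]] := meet_private kK kx.
  move: tO; rewrite Oy !inE => /orP [] /eqP tE; first by rewrite -tE.
  by rewrite -tE ext in nxy2.
have zI : z \in I.
  case/or4P: (cover z) => [/eqP zE | /eqP zE | zK | //].
  - by rewrite zE exy1 in nxz.
  - by rewrite zE eirr in eyz.
  - have [xz | xz] := eqVneq x z; first by rewrite xz esym eyz in nxy2.
    by rewrite cliqK in nxz.
have adjI_y2 : {in I, forall w, w != x -> e w y2}.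
  move=> w wI wx; case/or4P: (domyz w wx) => [/eqP wy | /eqP -> | // | ewz].
  - by rewrite -wy wI in y2I.
  - by rewrite esym.
  - by rewrite (negbTE (indI wI zI)) in ewz.
exact: (two_outsiders_in_G1 indI cliqK xI xK meet_only cover
  y1I y1K y2I y2K y12 nxy2 nadjK_y1 adjI_y2).
Qed.

End Meet.

Lemma indep_clique_bound : 2 <= #|K| ->
  #|I| + #|K| <= #|T| - 1 /\ (#|I| + #|K| = #|T| - 1 -> in_G1 e #|K|).
Proof.
move=> K2; have cnt := card_indep_clique.
have [IK0 | [x]] := set_0Vmem (I :&: K).
  have K0 : K != set0 by rewrite -card_gt0; lia.
  rewrite IK0 cards0 in cnt; have := disjoint_outside_gt0 K0.
  by split=> [|eqn]; [lia | apply: disjoint_outside1_in_G1 => //; lia].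
rewrite inE => /andP [xI xK]; rewrite (indep_clique_meet xI xK) cards1 in cnt.
have := meet_outside_ge2 xI xK K2.
by split=> [|eqn]; [lia | apply: (meet_outside2_in_G1 xI xK K2); lia].
Qed.

End IndepClique.

Lemma alpha_omega_bound :
  independence_number e + clique_number e <= #|T| - 1 /\
  (independence_number e + clique_number e = #|T| - 1 -> exists l, 2 <= l /\ in_G1 e l).
Proof.
have /card_gt0P [v _] : 0 < #|T| by lia.
have [a [b [eab _]]] := vertex_deleted_pair v.
have K2 := clique_number_ge2 esym eirr eab.
have [I /independentP indI ->] := independence_number_attained e.
have [K /cliqueP cliqK omegaE] := clique_number_attained e.
rewrite omegaE in K2 *; have [le eqG1] := indep_clique_bound indI cliqK K2.
by split=> // eqn; exists #|K|; split; last exact: eqG1.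
Qed.

End MaximalCritical.

Theorem theorem3p6 (T : finType) (e : rel T) :
  simple_graph e ->
  connected_on e [set: T] ->
  maximal_vertex_critical e 3 ->
  independence_number e + clique_number e <= #|T| - 1 /\
  (independence_number e + clique_number e = #|T| - 1 <->
   exists l : nat, 2 <= l /\ in_G1 e l).
Proof.
move=> [esym eirr] conn [[gc3 edge_crit] [[card3 [_ conn_del]] [_ vertex_crit]]].
have [le eqG1] := alpha_omega_bound esym eirr conn gc3 edge_crit card3 conn_del vertex_crit.
split=> //; split=> // [[l [_ /in_G1_bounds [nT la lw]]]]; lia.
Qed.
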